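(* Let $h>0$ and let $(\tau,\mu):\mathbb R\to\mathbb R^2$ be any solution of the system $\tau'=1+K(\tau,\mu)\mu$, $\mu'=-K(\tau,\mu)\tau$. Then $$\lim_{s\to+\infty}\tau(s)=+\infty,\quad \lim_{s\to-\infty}\tau(s)=-\infty,\quad \lim_{s\to+\infty}\mu(s)=-\infty,\quad \lim_{s\to-\infty}\mu(s)=+\infty.$$
   Context: Fix $h>0$. For $(\tau,\mu)\in\mathbb R^2$ put $r^2=\tau^2+\mu^2$ and define $K:\mathbb R^2\to\mathbb R$ by $$K(\tau,\mu)=\frac{2\big(\tau^2+h^2(1+\mu^2)\big)\tau+(h^2-1)(1+\mu^2)\mu}{(1+r^2)(h^2+r^2)}.$$ Consider the autonomous ODE system $\tau'=1+K(\tau,\mu)\mu$, $\mu'=-K(\tau,\mu)\tau$ for functions $s\mapsto(\tau(s),\mu(s))$; all its solutions are defined on $\mathbb R$. *)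

From Stdlib Require Import Reals.
From Coquelicot Require Import Coquelicot.
Open Scope R_scope.

Definition K (h tau mu : R) : R :=
  let r2 := tau ^ 2 + mu ^ 2 in
  (2 * (tau ^ 2 + h ^ 2 * (1 + mu ^ 2)) * tau + (h ^ 2 - 1) * (1 + mu ^ 2) * mu)
  / ((1 + r2) * (h ^ 2 + r2)).

(* Along every solution [(tau^2 + mu^2)' = 2 tau].  If [tau] stayed
   nonpositive, [tau^2 + mu^2] would stay bounded and [tau] would be pushed
   across the [mu]-axis at a uniform rate, so [tau] becomes positive, and it
   stays positive because [tau' > 0] on the axis.  Then [mu] becomes
   negative: otherwise the slope [mu / tau] decays like [1 / (tau + mu)]
   while [tau + mu] grows at most linearly, so the slope tends to [-oo].
   Once [tau > 0 > mu] the solution is trapped in a cone [- M tau < mu < 0],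
   where [tau] is comparable to [|(tau, mu)|] and hence unbounded, and it
   finally enters the region [mu < - tau], in which [tau + mu] keeps
   decreasing.  The behaviour as [s -> -oo] follows by applying this to
   [(- tau (- s), - mu (- s))], again a solution because [K] is odd. *)

From Stdlib Require Import Reals Lra Psatz Classical.
From Coquelicot Require Import Coquelicot.
Open Scope R_scope.

(** * Differential inequalities on the real line *)

Lemma is_derive_near (f : R -> R) x l e : is_derive f x l -> 0 < e ->
  exists d, 0 < d /\ forall y, Rabs (y - x) < d -> Rabs (f y - f x) < e.
Proof.
  intros Hf He.
  assert (Hc : continuity_pt f x).
  { apply continuity_pt_filterlim, (ex_derive_continuous (V := R_NormedModule)).
    exists l; exact Hf. }
  destruct (proj1 (continuity_pt_locally f x) Hc (mkposreal e He)) as [d Hd].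
  exists d; split; [apply cond_pos|]. intros y Hy; apply Hd; exact Hy.
Qed.

Lemma is_derive_pos_left (f : R -> R) x l : is_derive f x l -> 0 < l ->
  exists d, 0 < d /\ forall u, 0 < u < d -> f (x - u) < f x.
Proof.
  intros Hf Hl. apply is_derive_Reals in Hf.
  destruct (Hf (l / 2) ltac:(lra)) as [d Hd].
  exists d; split; [apply cond_pos|]. intros u [Hu Hud].
  assert (Hq : Rabs ((f (x + - u) - f x) / - u - l) < l / 2).
  { apply Hd; [lra|]. rewrite Rabs_Ropp, Rabs_pos_eq; lra. }
  apply Rabs_def2 in Hq. replace (x + - u) with (x - u) in Hq by ring.
  assert (Hslope : 0 < (f (x - u) - f x) / - u) by lra.
  assert (f (x - u) - f x = - u * ((f (x - u) - f x) / - u)) by (field; lra).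
  nra.
Qed.

Lemma is_derive_le_slope (f df : R -> R) a b k : a <= b ->
  (forall x, a <= x <= b -> is_derive f x (df x)) ->
  (forall x, a <= x <= b -> df x <= k) -> f b <= f a + k * (b - a).
Proof.
  intros Hab Hf Hk. destruct (Req_dec a b) as [<-|Hne]; [lra|].
  destruct (MVT_cor3 f df a b) as [c [Hac [Hcb ->]]]; [lra| |].
  - intros x Hax Hxb. apply is_derive_Reals, Hf; lra.
  - assert (df c <= k) by (apply Hk; lra). nra.
Qed.

Lemma is_derive_ge_slope (f df : R -> R) a b k : a <= b ->
  (forall x, a <= x <= b -> is_derive f x (df x)) ->
  (forall x, a <= x <= b -> k <= df x) -> f a + k * (b - a) <= f b.
Proof.
  intros Hab Hf Hk.
  enough (- f b <= - f a + - k * (b - a)) by lra.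
  apply (is_derive_le_slope (fun x => - f x) (fun x => - df x)); [exact Hab| |].
  - intros x Hx. apply (is_derive_opp f), Hf, Hx.
  - intros x Hx. specialize (Hk x Hx). lra.
Qed.

Lemma is_derive_barrier (f df : R -> R) a b c : a <= b ->
  (forall x, a <= x <= b -> is_derive f x (df x)) -> c < f a ->
  (forall x, a <= x <= b -> f x = c -> 0 < df x) -> c < f b.
Proof.
  intros Hab Hf Hfa Hcross. apply Rnot_le_lt; intro Hfb.
  set (E := fun t => a <= t <= b /\ forall u, a <= u <= t -> c < f u).
  assert (HE : bound E) by (exists b; intros t [Ht _]; lra).
  assert (Ea : E a) by (split; [lra | intros u Hu; replace u with a by lra; exact Hfa]).
  (* [m] is the first time at which [f <= c]. *)
  destruct (completeness E HE (ex_intro _ a Ea)) as [m [Hub Hlub]].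
  assert (Ham : a <= m) by (apply Hub, Ea).
  assert (Hmb : m <= b) by (apply Hlub; intros t [Ht _]; lra).
  assert (Hbefore : forall u, a <= u < m -> c < f u).
  { intros u Hu. apply NNPP; intro Hn.
    enough (m <= u) by lra. apply Hlub. intros t [_ Ht].
    destruct (Rle_or_lt t u) as [|Hut]; [lra|]. exfalso; apply Hn, Ht; lra. }
  assert (Hfm : is_derive f m (df m)) by (apply Hf; lra).
  destruct (Rle_or_lt (f m) c) as [Hle|Hgt].
  - assert (Hleft : exists d, 0 < d /\ forall u, 0 < u < d -> f (m - u) <= c).
    { destruct Hle as [Hlt|Heq].
      - destruct (is_derive_near f m (df m) (c - f m) Hfm ltac:(lra)) as [d [Hd Hnear]].
        exists d; split; [exact Hd|]. intros u Hu.
        assert (Hu' : Rabs (m - u - m) < d) by (rewrite Rabs_left; lra).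
        specialize (Hnear _ Hu'). apply Rabs_def2 in Hnear. lra.
      - destruct (is_derive_pos_left f m (df m) Hfm) as [d [Hd Hdec]];
          [apply Hcross; lra|].
        exists d; split; [exact Hd|]. intros u Hu. specialize (Hdec u Hu). lra. }
    assert (Hma : a < m) by (destruct (Req_dec a m) as [<-|]; lra).
    destruct Hleft as [d [Hd Hleft]].
    set (u := Rmin (d / 2) (m - a)).
    assert (0 < u <= d / 2 /\ u <= m - a)
      by (unfold u; repeat split; [apply Rmin_pos|apply Rmin_l|apply Rmin_r]; lra).
    assert (c < f (m - u)) by (apply Hbefore; lra).
    assert (f (m - u) <= c) by (apply Hleft; lra).
    lra.
  - assert (Hmb' : m < b) by (destruct (Req_dec m b) as [->|]; lra).
    destruct (is_derive_near f m (df m) (f m - c) Hfm ltac:(lra)) as [d [Hd Hnear]].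
    set (t := Rmin (m + d / 2) b).
    assert (m < t <= m + d / 2 /\ t <= b)
      by (unfold t; repeat split; [apply Rmin_glb_lt|apply Rmin_l|apply Rmin_r]; lra).
    enough (E t) by (assert (t <= m) by (apply Hub; assumption); lra).
    split; [lra|]. intros u Hu.
    destruct (Rlt_or_le u m); [apply Hbefore; lra|].
    assert (Hu' : Rabs (u - m) < d) by (rewrite Rabs_pos_eq; lra).
    specialize (Hnear _ Hu'). apply Rabs_def2 in Hnear. lra.
Qed.

Lemma is_derive_lin_comb (f g : R -> R) a b x df dg :
  is_derive f x df -> is_derive g x dg ->
  is_derive (fun s => a * f s + b * g s) x (a * df + b * dg).
Proof.
  intros Hf Hg.
  apply (is_derive_plus (fun s => a * f s) (fun s => b * g s));
    apply is_derive_scal; assumption.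
Qed.

Lemma is_derive_ln_comp (f : R -> R) x df : 0 < f x -> is_derive f x df ->
  is_derive (fun s => ln (f s)) x (df / f x).
Proof.
  intros Hpos Hf. replace (df / f x) with (scal df (/ f x))
    by (unfold scal; simpl; unfold mult; simpl; unfold Rdiv; ring).
  apply (is_derive_comp ln f); [apply is_derive_ln, Hpos | exact Hf].
Qed.

Lemma is_derive_reflect (f : R -> R) s df :
  is_derive f (- s) df -> is_derive (fun s => - f (- s)) s df.
Proof.
  intros Hf. replace df with (- scal (-1) df)
    by (unfold scal; simpl; unfold mult; simpl; ring).
  apply (is_derive_opp (fun s => f (- s))), (is_derive_comp f (fun s => - s)); [exact Hf|].
  auto_derive; [exact I | ring].
Qed.

Lemma is_lim_reflect (f : R -> R) (l : Rbar) :
  is_lim f p_infty l -> is_lim (fun s => - f (- s)) m_infty (Rbar_opp l).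
Proof.
  intros Hf. apply (is_lim_opp (fun s => f (- s))), (is_lim_comp f (fun s => - s) _ _ p_infty Hf).
  - exact (is_lim_opp (fun s => s) m_infty m_infty (is_lim_id m_infty)).
  - exists 0; intros x _; discriminate.
Qed.

(** * The vector field *)

Definition tau_field (h t m : R) : R := 1 + K h t m * m.
Definition mu_field (h t m : R) : R := - (K h t m * t).

Definition K_den (h t m : R) : R := (1 + (t ^ 2 + m ^ 2)) * (h ^ 2 + (t ^ 2 + m ^ 2)).
Definition K_num (h t m : R) : R :=
  2 * (t ^ 2 + h ^ 2 * (1 + m ^ 2)) * t + (h ^ 2 - 1) * (1 + m ^ 2) * m.

Lemma K_eq h t m : K h t m = K_num h t m / K_den h t m.
Proof. reflexivity. Qed.

Lemma K_den_pos h t m : 0 < h -> 0 < K_den h t m.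
Proof. intros Hh. unfold K_den. apply Rmult_lt_0_compat; nra. Qed.

Lemma K_den_mul h t m : 0 < h -> K_den h t m * K h t m = K_num h t m.
Proof.
  intros Hh. rewrite K_eq. field. apply Rgt_not_eq, K_den_pos, Hh.
Qed.

Lemma K_den_tau_field h t m : 0 < h ->
  K_den h t m * tau_field h t m = K_den h t m + K_num h t m * m.
Proof. intros Hh. unfold tau_field. rewrite <- (K_den_mul h t m Hh). ring. Qed.

Lemma K_den_mu_field h t m : 0 < h ->
  K_den h t m * mu_field h t m = - (K_num h t m * t).
Proof. intros Hh. unfold mu_field. rewrite <- (K_den_mul h t m Hh). ring. Qed.

Lemma K_opp h t m : 0 < h -> K h (- t) (- m) = - K h t m.
Proof.
  intros Hh. pose proof (K_den_pos h t m Hh). rewrite !K_eq.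
  unfold K_num, K_den in *. field. split; nra.
Qed.

Lemma tau_field_opp h t m : 0 < h -> tau_field h (- t) (- m) = tau_field h t m.
Proof. intros Hh. unfold tau_field. rewrite K_opp by exact Hh. ring. Qed.

Lemma mu_field_opp h t m : 0 < h -> mu_field h (- t) (- m) = mu_field h t m.
Proof. intros Hh. unfold mu_field. rewrite K_opp by exact Hh. ring. Qed.

Lemma tau_field_pos_axis h m : 0 < h -> 0 < tau_field h 0 m.
Proof.
  intros Hh. apply (Rmult_lt_reg_l (K_den h 0 m)); [apply K_den_pos, Hh|].
  rewrite Rmult_0_r, K_den_tau_field by exact Hh. unfold K_den, K_num.
  replace ((1 + (0 ^ 2 + m ^ 2)) * (h ^ 2 + (0 ^ 2 + m ^ 2)) +
    (2 * (0 ^ 2 + h ^ 2 * (1 + m ^ 2)) * 0 + (h ^ 2 - 1) * (1 + m ^ 2) * m) * m)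
    with (h ^ 2 * (1 + m ^ 2) ^ 2) by ring.
  apply Rmult_lt_0_compat; nra.
Qed.

Lemma mu_field_neg_axis h t : 0 < h -> 0 < t -> mu_field h t 0 < 0.
Proof.
  intros Hh Ht. apply (Rmult_lt_reg_l (K_den h t 0)); [apply K_den_pos, Hh|].
  rewrite Rmult_0_r, K_den_mu_field by exact Hh. unfold K_num.
  replace (- ((2 * (t ^ 2 + h ^ 2 * (1 + 0 ^ 2)) * t + (h ^ 2 - 1) * (1 + 0 ^ 2) * 0) * t))
    with (- (2 * (t ^ 2 + h ^ 2) * (t * t))) by ring.
  assert (0 < 2 * (t ^ 2 + h ^ 2) * (t * t)) by (apply Rmult_lt_0_compat; nra).
  lra.
Qed.

Lemma field_enters_cone h t M : 0 < h -> 0 < t -> 2 <= M ->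
  0 < mu_field h t (- (M * t)) + M * tau_field h t (- (M * t)).
Proof.
  intros Hh Ht HM. apply (Rmult_lt_reg_l (K_den h t (- (M * t)))); [apply K_den_pos, Hh|].
  set (m := - (M * t)).
  replace (K_den h t m * (mu_field h t m + M * tau_field h t m))
    with (K_den h t m * mu_field h t m + M * (K_den h t m * tau_field h t m)) by ring.
  rewrite Rmult_0_r, K_den_tau_field, K_den_mu_field by exact Hh. unfold m.
  unfold K_den, K_num.
  match goal with |- 0 < ?X => replace X with
    ((1 + M ^ 2) * (M - 2) * (1 + h ^ 2 * M ^ 2) * (t ^ 2) ^ 2
     + 2 * (1 + M ^ 2) * h ^ 2 * (M - 1) * t ^ 2 + M * h ^ 2) by ring end.
  assert (0 <= (1 + M ^ 2) * (M - 2) * (1 + h ^ 2 * M ^ 2) * (t ^ 2) ^ 2)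
    by (repeat apply Rmult_le_pos; nra).
  assert (0 <= 2 * (1 + M ^ 2) * h ^ 2 * (M - 1) * t ^ 2)
    by (repeat apply Rmult_le_pos; nra).
  nra.
Qed.

Lemma K_den_split h t m :
  K_den h t m = (1 + (t ^ 2 + m ^ 2)) * (t ^ 2 + m ^ 2) + h ^ 2 * (1 + (t ^ 2 + m ^ 2)).
Proof. unfold K_den; ring. Qed.

Lemma K_num_split h t m :
  K_num h t m = (2 * t ^ 3 - m - m ^ 3) + h ^ 2 * ((1 + m ^ 2) * (2 * t + m)).
Proof. unfold K_num; ring. Qed.

Lemma K_den_diag_field h t m : 0 < h ->
  K_den h t m * (tau_field h t m + mu_field h t m) = K_den h t m + K_num h t m * (m - t).
Proof.
  intros Hh. rewrite Rmult_plus_distr_l, K_den_tau_field, K_den_mu_field by exact Hh. ring.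
Qed.

(* Both the [h]-free part and the [h^2]-part of [K_den + K_num * (m - t)]
   are at most [- 1/5] times the corresponding part of [K_den]. *)
Lemma diag_field_le h t m : 0 < h -> 2 <= t -> - t <= m <= 0 ->
  tau_field h t m + mu_field h t m <= - 1 / 5.
Proof.
  intros Hh Ht [Hm1 Hm2].
  assert (Hh2 : 0 <= h ^ 2) by nra.
  assert (Hcubic : 6 / 5 * (1 + (t ^ 2 + m ^ 2)) * (t ^ 2 + m ^ 2)
                   <= (t - m) * (2 * t ^ 3 - m - m ^ 3)).
  { set (u := - m). assert (Hu : m = - u) by (unfold u; ring). rewrite Hu.
    assert (0 <= u <= t) by (unfold u; lra).
    assert (Hq : 0 <= 2 * t ^ 3 - 12 / 5 * t ^ 2 * u + t * u ^ 2 - 1 / 5 * u ^ 3).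
    { replace (2 * t ^ 3 - 12 / 5 * t ^ 2 * u + t * u ^ 2 - 1 / 5 * u ^ 3) with
        (2 * (t - u) ^ 3 + 18 / 5 * (t - u) ^ 2 * u + 11 / 5 * (t - u) * u ^ 2 + 2 / 5 * u ^ 3)
        by field.
      assert (0 <= (t - u) ^ 3) by (apply pow_le; lra).
      assert (0 <= (t - u) ^ 2 * u) by (apply Rmult_le_pos; nra).
      assert (0 <= (t - u) * u ^ 2) by (apply Rmult_le_pos; nra).
      assert (0 <= u ^ 3) by (apply pow_le; lra).
      lra. }
    assert (0 <= u * (2 * t ^ 3 - 12 / 5 * t ^ 2 * u + t * u ^ 2 - 1 / 5 * u ^ 3))
      by (apply Rmult_le_pos; lra).
    assert (u ^ 2 <= t ^ 2) by nra. assert (4 <= t ^ 2) by nra.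
    assert (0 <= t * u) by nra. assert (t ^ 4 = t ^ 2 * t ^ 2) by ring.
    nra. }
  assert (Hquad : 6 / 5 * (1 + (t ^ 2 + m ^ 2)) <= (t - m) * ((1 + m ^ 2) * (2 * t + m))).
  { assert (2 * t * t <= (t - m) * (2 * t + m)) by nra.
    assert ((1 + m ^ 2) * (2 * t * t) <= (1 + m ^ 2) * ((t - m) * (2 * t + m))) by nra.
    assert (4 <= t ^ 2) by nra. assert (4 * m ^ 2 <= m ^ 2 * t ^ 2) by nra.
    nra. }
  apply (Rmult_le_reg_l (K_den h t m)); [apply K_den_pos, Hh|].
  rewrite K_den_diag_field by exact Hh. rewrite K_num_split, !K_den_split. nra.
Qed.

Lemma diag_field_le_const h t m : 0 < h -> 0 < t -> 0 <= m ->
  tau_field h t m + mu_field h t m <= 7 + 3 * h ^ 2.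
Proof.
  intros Hh Ht Hm. assert (Hh2 : 0 <= h ^ 2) by nra.
  assert (Hcubic : (2 * t ^ 3 - m - m ^ 3) * (m - t)
                   <= 6 * (1 + (t ^ 2 + m ^ 2)) * (t ^ 2 + m ^ 2)).
  { assert (2 * t ^ 3 * m <= (t ^ 2 + m ^ 2) ^ 2) by nra.
    assert (m * t <= t ^ 2 + m ^ 2) by nra.
    assert (m ^ 3 * t <= (t ^ 2 + m ^ 2) ^ 2) by nra.
    nra. }
  assert (Hquad : ((1 + m ^ 2) * (2 * t + m)) * (m - t)
                  <= 3 * (1 + (t ^ 2 + m ^ 2)) * (t ^ 2 + m ^ 2)).
  { assert ((2 * t + m) * (m - t) <= m ^ 2 + t * m) by nra.
    assert ((1 + m ^ 2) * ((2 * t + m) * (m - t)) <= (1 + m ^ 2) * (m ^ 2 + t * m)) by nra.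
    assert (m ^ 2 + t * m <= 2 * (t ^ 2 + m ^ 2)) by nra.
    nra. }
  apply (Rmult_le_reg_l (K_den h t m)); [apply K_den_pos, Hh|].
  rewrite K_den_diag_field by exact Hh. rewrite K_num_split, !K_den_split.
  assert (h ^ 2 * (((1 + m ^ 2) * (2 * t + m)) * (m - t))
          <= h ^ 2 * (3 * (1 + (t ^ 2 + m ^ 2)) * (t ^ 2 + m ^ 2))) by nra.
  assert (0 <= h ^ 2 * (1 + (t ^ 2 + m ^ 2))) by nra.
  assert (0 <= (1 + (t ^ 2 + m ^ 2)) * (t ^ 2 + m ^ 2)) by nra.
  nra.
Qed.

(* Apart from the cross term [2 t m (t^2 + h^2 (1 + m^2))], which is at most
   [h^2 / 2] in absolute value once [|t| <= d], [K_den * tau_field] is a sum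
   of nonnegative terms including [h^2 (1 + m^2)^2 >= h^2]. *)
Lemma tau_field_lower_near_axis h R0 : 0 < h -> 0 <= R0 ->
  exists d c, 0 < d /\ 0 < c /\
    forall t m, t ^ 2 + m ^ 2 <= R0 -> - d <= t <= 0 -> c <= tau_field h t m.
Proof.
  intros Hh HR0.
  set (d := h ^ 2 / (4 * (1 + h ^ 2) * (1 + R0) ^ 2)).
  set (c := h ^ 2 / (2 * ((1 + R0) * (h ^ 2 + R0)))).
  assert (Hd : d * (4 * (1 + h ^ 2) * (1 + R0) ^ 2) = h ^ 2) by (unfold d; field; nra).
  assert (Hc : c * ((1 + R0) * (h ^ 2 + R0)) = h ^ 2 / 2) by (unfold c; field; nra).
  exists d, c; split; [unfold d; apply Rdiv_lt_0_compat; nra|].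
  split; [unfold c; apply Rdiv_lt_0_compat; nra|].
  intros t m HR [Hdt Ht].
  assert (Hd0 : 0 <= d) by (unfold d; apply Rdiv_le_0_compat; nra).
  assert (Hm : Rabs m <= 1 + R0).
  { destruct (Rle_or_lt 0 m); [rewrite Rabs_pos_eq | rewrite Rabs_left]; nra. }
  set (Q := t ^ 2 + h ^ 2 * (1 + m ^ 2)).
  assert (HQ : 0 <= Q <= (1 + h ^ 2) * (1 + R0)) by (unfold Q; nra).
  assert (Hcross : - (h ^ 2 / 2) <= 2 * t * m * Q).
  { assert (Htm : - t * Rabs m <= d * (1 + R0))
      by (apply Rmult_le_compat; [lra | apply Rabs_pos | lra | exact Hm]).
    assert (- t * Rabs m * Q <= d * (1 + R0) * ((1 + h ^ 2) * (1 + R0)))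
      by (apply Rmult_le_compat; [pose proof (Rabs_pos m); nra | lra | exact Htm | lra]).
    assert (- (t * m) <= - t * Rabs m)
      by (destruct (Rle_or_lt 0 m); [rewrite Rabs_pos_eq | rewrite Rabs_left]; nra).
    nra. }
  assert (Hlow : h ^ 2 / 2 <= K_den h t m * tau_field h t m).
  { rewrite K_den_tau_field by exact Hh.
    replace (K_den h t m + K_num h t m * m) with
      (h ^ 2 * (1 + m ^ 2) ^ 2 + (1 + h ^ 2) * t ^ 2 + 2 * t ^ 2 * m ^ 2 + (t ^ 2) ^ 2
       + 2 * t * m * Q) by (unfold Q, K_den, K_num; ring).
    assert (h ^ 2 <= h ^ 2 * (1 + m ^ 2) ^ 2) by nra.
    nra. }
  assert (Hden : K_den h t m <= (1 + R0) * (h ^ 2 + R0))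
    by (unfold K_den; apply Rmult_le_compat; nra).
  assert (Hc0 : 0 < c) by (unfold c; apply Rdiv_lt_0_compat; nra).
  apply (Rmult_le_reg_l (K_den h t m)); [apply K_den_pos, Hh|].
  nra.
Qed.

Lemma slope_decay h R1 : 0 < h -> 0 < R1 ->
  exists k, 0 < k /\ forall t m, 0 < t -> 0 <= m -> R1 <= t ^ 2 + m ^ 2 ->
    (mu_field h t m * t - m * tau_field h t m) / t ^ 2 <= - k / (t + m).
Proof.
  intros Hh HR1.
  set (a := h ^ 2 / (1 + h ^ 2)).
  assert (Ha : 0 < a <= 1 /\ a <= h ^ 2).
  { unfold a. split; [split|]; [apply Rdiv_lt_0_compat; nra | apply Rle_div_l; nra
                                 | apply Rle_div_l; nra]. }
  set (k := a * R1 ^ 2 / ((1 + R1) * (h ^ 2 + R1))).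
  assert (Hk0 : 0 < k).
  { unfold k. apply Rdiv_lt_0_compat; [apply Rmult_lt_0_compat; [lra | apply pow_lt, HR1] | nra]. }
  exists k; split; [exact Hk0|].
  intros t m Ht Hm HR.
  set (R := t ^ 2 + m ^ 2) in *. set (L := t + m).
  pose proof (K_den_pos h t m Hh) as HD.
  set (E := R * (m + 2 * t) * (t ^ 2 + h ^ 2 * m ^ 2) + 2 * h ^ 2 * R * (m + t) + h ^ 2 * m).
  assert (HE : K_den h t m * (mu_field h t m * t - m * tau_field h t m) = - E).
  { replace (K_den h t m * (mu_field h t m * t - m * tau_field h t m)) with
      (K_den h t m * mu_field h t m * t - m * (K_den h t m * tau_field h t m)) by ring.
    rewrite K_den_mu_field, K_den_tau_field by exact Hh.
    unfold E, R, K_den, K_num. ring. }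
  assert (HEL : a * R ^ 2 * L <= E).
  { assert (a * R <= t ^ 2 + h ^ 2 * m ^ 2) by (unfold R; nra).
    assert (a * R * L <= (t ^ 2 + h ^ 2 * m ^ 2) * (m + 2 * t))
      by (unfold L; apply Rmult_le_compat; nra).
    assert (0 <= h ^ 2 * R) by (apply Rmult_le_pos; nra).
    assert (0 <= h ^ 2 * m) by (apply Rmult_le_pos; nra).
    assert (R * (a * R * L) <= R * ((t ^ 2 + h ^ 2 * m ^ 2) * (m + 2 * t)))
      by (apply Rmult_le_compat_l; nra).
    unfold E. nra. }
  assert (Hk : k * K_den h t m <= a * R ^ 2).
  { assert (Hden : K_den h t m * R1 ^ 2 <= (1 + R1) * (h ^ 2 + R1) * R ^ 2).
    { unfold K_den. fold R.
      assert (HRR : R * R1 ^ 2 <= R1 * R ^ 2) by (assert (0 <= R1 * R) by nra; nra).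
      assert (h ^ 2 * R1 ^ 2 <= h ^ 2 * R ^ 2) by (apply Rmult_le_compat_l; nra).
      assert (h ^ 2 * (R * R1 ^ 2) <= h ^ 2 * (R1 * R ^ 2)) by (apply Rmult_le_compat_l; nra).
      nra. }
    unfold k. apply (Rmult_le_reg_r ((1 + R1) * (h ^ 2 + R1))); [nra|].
    replace (a * R1 ^ 2 / ((1 + R1) * (h ^ 2 + R1)) * K_den h t m * ((1 + R1) * (h ^ 2 + R1)))
      with (a * (K_den h t m * R1 ^ 2)) by (field; nra).
    replace (a * R ^ 2 * ((1 + R1) * (h ^ 2 + R1))) with (a * ((1 + R1) * (h ^ 2 + R1) * R ^ 2))
      by ring.
    apply Rmult_le_compat_l; lra. }
  assert (HL : 0 < L) by (unfold L; lra).
  assert (Hkey : k * K_den h t m * t ^ 2 <= E * L).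
  { assert (t ^ 2 <= R) by (unfold R; nra).
    assert (R <= L ^ 2) by (unfold R, L; nra).
    assert (0 <= k * K_den h t m) by (apply Rmult_le_pos; lra).
    assert (k * K_den h t m * t ^ 2 <= a * R ^ 2 * R) by (apply Rmult_le_compat; nra).
    assert (a * R ^ 2 * R <= a * R ^ 2 * L ^ 2) by (apply Rmult_le_compat_l; nra).
    nra. }
  apply (Rmult_le_reg_l (L * K_den h t m * t ^ 2)); [apply Rmult_lt_0_compat; nra|].
  replace (L * K_den h t m * t ^ 2 * ((mu_field h t m * t - m * tau_field h t m) / t ^ 2))
    with (L * (K_den h t m * (mu_field h t m * t - m * tau_field h t m))) by (field; lra).
  replace (L * K_den h t m * t ^ 2 * (- k / L)) with (- (k * K_den h t m * t ^ 2))
    by (field; lra).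
  rewrite HE. nra.
Qed.

(** * Behaviour of a solution as [s -> +oo] *)

Section Forward.

Variables (h : R) (tau mu : R -> R).
Hypothesis h_pos : 0 < h.
Hypothesis tau_derive : forall s, is_derive tau s (tau_field h (tau s) (mu s)).
Hypothesis mu_derive : forall s, is_derive mu s (mu_field h (tau s) (mu s)).

Let r2 (s : R) : R := tau s ^ 2 + mu s ^ 2.

Lemma r2_derive s : is_derive r2 s (2 * tau s).
Proof.
  replace (2 * tau s) with
    (INR 2 * tau_field h (tau s) (mu s) * tau s ^ pred 2
     + INR 2 * mu_field h (tau s) (mu s) * mu s ^ pred 2)
    by (unfold tau_field, mu_field; simpl; ring).
  apply (is_derive_plus (fun s => tau s ^ 2) (fun s => mu s ^ 2));
    apply is_derive_pow; auto.
Qed.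

Lemma r2_nonneg s : 0 <= r2 s.
Proof. unfold r2; nra. Qed.

Lemma r2_le_slope a b k : a <= b -> (forall x, a <= x <= b -> tau x <= k) ->
  r2 b <= r2 a + 2 * k * (b - a).
Proof.
  intros Hab Hk. apply (is_derive_le_slope r2 (fun x => 2 * tau x)); [exact Hab | |].
  - intros x _. apply r2_derive.
  - intros x Hx. specialize (Hk x Hx). lra.
Qed.

Lemma r2_ge_slope a b k : a <= b -> (forall x, a <= x <= b -> k <= tau x) ->
  r2 a + 2 * k * (b - a) <= r2 b.
Proof.
  intros Hab Hk. apply (is_derive_ge_slope r2 (fun x => 2 * tau x)); [exact Hab | |].
  - intros x _. apply r2_derive.
  - intros x Hx. specialize (Hk x Hx). lra.
Qed.

Lemma tau_eventually_pos : exists s, 0 < tau s.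
Proof.
  apply NNPP; intro Hn.
  assert (Hle : forall s, tau s <= 0) by (intro s; apply Rnot_lt_le; intro; apply Hn; eauto).
  assert (Hr2 : forall s, 0 <= s -> r2 s <= r2 0).
  { intros s Hs. pose proof (r2_le_slope 0 s 0 Hs (fun x _ => Hle x)). lra. }
  destruct (tau_field_lower_near_axis h (r2 0) h_pos (r2_nonneg 0))
    as [d [c [Hd [Hc Hnear]]]].
  destruct (classic (exists s0, 0 <= s0 /\ - d < tau s0)) as [[s0 [Hs0 Hts0]] | Hfar].
  - assert (Hstay : forall s, s0 <= s -> - d < tau s).
    { intros s Hs. apply (is_derive_barrier tau (fun x => tau_field h (tau x) (mu x)) s0 s);
        auto.
      intros x Hx Hx2. enough (c <= tau_field h (tau x) (mu x)) by lra.
      apply Hnear; [apply Hr2; lra | specialize (Hle x); lra]. }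
    set (s := s0 + (1 - tau s0) / c).
    assert (Hs : s0 <= s)
      by (unfold s; specialize (Hle s0); assert (0 <= (1 - tau s0) / c)
            by (apply Rdiv_le_0_compat; lra); lra).
    assert (Hgrow : tau s0 + c * (s - s0) <= tau s).
    { apply (is_derive_ge_slope tau (fun x => tau_field h (tau x) (mu x))); auto.
      intros x Hx. specialize (Hstay x ltac:(lra)). specialize (Hle x).
      apply Hnear; [apply Hr2 | split]; lra. }
    assert (c * (s - s0) = 1 - tau s0) by (unfold s; field; lra).
    specialize (Hle s). lra.
  - assert (Hall : forall s, 0 <= s -> tau s <= - d).
    { intros s Hs. apply Rnot_lt_le; intro. apply Hfar; eauto. }
    set (s := r2 0 / d + 1).
    assert (Hs : 0 <= s) by (unfold s; pose proof (r2_nonneg 0);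
      assert (0 <= r2 0 / d) by (apply Rdiv_le_0_compat; lra); lra).
    assert (r2 s <= r2 0 + 2 * (- d) * (s - 0))
      by (apply r2_le_slope; [exact Hs | intros x Hx; apply Hall; lra]).
    assert (d * s = r2 0 + d) by (unfold s; field; lra).
    pose proof (r2_nonneg 0). pose proof (r2_nonneg s). lra.
Qed.

Lemma tau_pos_after s1 : 0 < tau s1 -> forall s, s1 <= s -> 0 < tau s.
Proof.
  intros H1 s Hs.
  apply (is_derive_barrier tau (fun x => tau_field h (tau x) (mu x)) s1 s); auto.
  intros x _ Hx. rewrite Hx. apply tau_field_pos_axis, h_pos.
Qed.

Let slope (s : R) : R := mu s / tau s.

Lemma slope_derive s : tau s <> 0 ->
  is_derive slope s
    ((mu_field h (tau s) (mu s) * tau s - mu s * tau_field h (tau s) (mu s)) / tau s ^ 2).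
Proof. intros Hs. apply is_derive_div; auto. Qed.

Section FirstQuadrant.

Variable s1 : R.
Hypothesis tau_s1_pos : 0 < tau s1.
Hypothesis mu_nonneg : forall s, s1 <= s -> 0 <= mu s.

Lemma slope_derive_le : exists k, 0 < k /\ forall s, s1 <= s ->
  (mu_field h (tau s) (mu s) * tau s - mu s * tau_field h (tau s) (mu s)) / tau s ^ 2
  <= - k / (tau s + mu s).
Proof.
  pose proof (tau_pos_after s1 tau_s1_pos) as Hpos.
  assert (HR1 : 0 < r2 s1) by (unfold r2; nra).
  destruct (slope_decay h (r2 s1) h_pos HR1) as [k [Hk Hdecay]].
  exists k; split; [exact Hk|]. intros s Hs. apply Hdecay; auto.
  assert (r2 s1 + 2 * 0 * (s - s1) <= r2 s)
    by (apply r2_ge_slope; [exact Hs | intros x Hx; apply Rlt_le, Hpos; lra]).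
  unfold r2 in *. lra.
Qed.

(* [slope + (k / B) ln (tau + mu)] is nonincreasing, where [B] bounds the
   growth rate of [tau + mu]; since [slope >= 0], [tau + mu] stays bounded. *)
Lemma sum_bounded : exists S, forall s, s1 <= s -> tau s + mu s <= S.
Proof.
  pose proof (tau_pos_after s1 tau_s1_pos) as Hpos.
  destruct slope_derive_le as [k [Hk Hslope]].
  set (B := 7 + 3 * h ^ 2). assert (HB : 0 < B) by (unfold B; nra).
  set (L := fun s => 1 * tau s + 1 * mu s).
  assert (HL : forall s, s1 <= s -> 0 < L s)
    by (intros s Hs; unfold L; specialize (Hpos s Hs); specialize (mu_nonneg s Hs); lra).
  set (psi := fun s => 1 * slope s + k / B * ln (L s)).
  assert (Hpsi : forall s, s1 <= s -> psi s <= psi s1).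
  { intros s Hs.
    enough (psi s <= psi s1 + 0 * (s - s1)) by lra.
    apply (is_derive_le_slope psi (fun x =>
      1 * ((mu_field h (tau x) (mu x) * tau x - mu x * tau_field h (tau x) (mu x)) / tau x ^ 2)
      + k / B * ((1 * tau_field h (tau x) (mu x) + 1 * mu_field h (tau x) (mu x)) / L x)));
      [exact Hs | |].
    - intros x Hx. apply is_derive_lin_comb.
      + apply slope_derive. specialize (Hpos x ltac:(lra)). lra.
      + apply is_derive_ln_comp; [apply HL; lra|]. apply is_derive_lin_comb; auto.
    - intros x Hx. specialize (HL x ltac:(lra)).
      assert (Hgrowth : tau_field h (tau x) (mu x) + mu_field h (tau x) (mu x) <= B)
        by (apply diag_field_le_const; [exact h_pos | apply Hpos | apply mu_nonneg]; lra).
      specialize (Hslope x ltac:(lra)). unfold L in *.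
      assert (k / B * ((1 * tau_field h (tau x) (mu x) + 1 * mu_field h (tau x) (mu x))
                / (1 * tau x + 1 * mu x)) <= k / (tau x + mu x)).
      { replace (k / (tau x + mu x)) with (k / B * (B / (1 * tau x + 1 * mu x)))
          by (field; lra).
        apply Rmult_le_compat_l; [apply Rlt_le, Rdiv_lt_0_compat; lra|].
        apply Rmult_le_compat_r; [apply Rlt_le, Rinv_0_lt_compat; lra | lra]. }
      replace (- k / (tau x + mu x)) with (- (k / (tau x + mu x))) in Hslope by (field; lra).
      lra. }
  set (C := psi s1) in Hpsi.
  exists (exp (C * B / k)). intros s Hs.
  assert (Hsl : 0 <= slope s)
    by (apply Rdiv_le_0_compat; [apply mu_nonneg | apply Hpos]; lra).
  specialize (Hpsi s Hs). specialize (HL s Hs). unfold psi, L in *.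
  assert (Hln : ln (1 * tau s + 1 * mu s) <= C * B / k).
  { apply (Rmult_le_reg_l (k / B)); [apply Rdiv_lt_0_compat; lra|].
    replace (k / B * (C * B / k)) with C by (field; lra). lra. }
  apply Rnot_lt_le; intro Hlt. apply ln_increasing in Hlt; [|apply exp_pos].
  rewrite ln_exp in Hlt. replace (tau s + mu s) with (1 * tau s + 1 * mu s) in Hlt by ring.
  lra.
Qed.

(* With [tau + mu <= S], the slope decreases at rate at least [k / S]. *)
Lemma mu_nonneg_absurd : False.
Proof.
  pose proof (tau_pos_after s1 tau_s1_pos) as Hpos.
  destruct slope_derive_le as [k [Hk Hslope]].
  destruct sum_bounded as [S HS].
  assert (HS0 : 0 < S)
    by (specialize (HS s1 (Rle_refl _)); specialize (mu_nonneg s1 (Rle_refl _)); lra).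
  assert (Hnonneg : forall s, s1 <= s -> 0 <= slope s)
    by (intros s Hs; apply Rdiv_le_0_compat; [apply mu_nonneg | apply Hpos]; lra).
  set (s := s1 + slope s1 * S / k + 1).
  assert (Hs : s1 <= s)
    by (unfold s; pose proof (Hnonneg s1 (Rle_refl _));
        assert (0 <= slope s1 * S / k) by (apply Rdiv_le_0_compat; nra); lra).
  assert (Hdecay : slope s <= slope s1 + - (k / S) * (s - s1)).
  { apply (is_derive_le_slope slope (fun x =>
      (mu_field h (tau x) (mu x) * tau x - mu x * tau_field h (tau x) (mu x)) / tau x ^ 2));
      [exact Hs | intros x Hx; apply slope_derive; specialize (Hpos x ltac:(lra)); lra |].
    intros x Hx. specialize (Hslope x ltac:(lra)). specialize (HS x ltac:(lra)).
    assert (Hsum : 0 < tau x + mu x)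
      by (specialize (Hpos x ltac:(lra)); specialize (mu_nonneg x ltac:(lra)); lra).
    assert (k / S <= k / (tau x + mu x))
      by (apply Rmult_le_compat_l; [lra | apply Rinv_le_contravar; lra]).
    replace (- k / (tau x + mu x)) with (- (k / (tau x + mu x))) in Hslope by (field; lra).
    lra. }
  assert (k / S * (s - s1) = slope s1 + k / S) by (unfold s; field; lra).
  assert (0 < k / S) by (apply Rdiv_lt_0_compat; lra).
  specialize (Hnonneg s Hs). lra.
Qed.

End FirstQuadrant.

Lemma mu_eventually_neg s1 : 0 < tau s1 -> exists s2, s1 <= s2 /\ mu s2 < 0.
Proof.
  intros H1. apply NNPP; intro Hn. apply (mu_nonneg_absurd s1 H1).
  intros s Hs. apply Rnot_lt_le; intro. apply Hn; eauto.
Qed.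

Lemma eventually_in_cone : exists s0 M, forall s, s0 <= s ->
  0 < tau s /\ - (M * tau s) < mu s < 0.
Proof.
  destruct tau_eventually_pos as [s1 H1].
  pose proof (tau_pos_after s1 H1) as Hpos.
  destruct (mu_eventually_neg s1 H1) as [s2 [H12 H2]].
  assert (Ht2 : 0 < tau s2) by (apply Hpos; lra).
  set (M := Rmax 2 (- mu s2 / tau s2) + 1).
  assert (HM : 2 <= M) by (unfold M; pose proof (Rmax_l 2 (- mu s2 / tau s2)); lra).
  exists s2, M. intros s Hs. split; [apply Hpos; lra|]. split.
  - enough (0 < 1 * mu s + M * tau s) by lra.
    apply (is_derive_barrier (fun s => 1 * mu s + M * tau s)
      (fun x => 1 * mu_field h (tau x) (mu x) + M * tau_field h (tau x) (mu x)) s2 s);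
      [exact Hs | intros x _; apply is_derive_lin_comb; auto | |].
    + assert (- mu s2 / tau s2 < M)
        by (unfold M; pose proof (Rmax_r 2 (- mu s2 / tau s2)); lra).
      assert (- mu s2 / tau s2 * tau s2 < M * tau s2) by (apply Rmult_lt_compat_r; lra).
      replace (- mu s2 / tau s2 * tau s2) with (- mu s2) in * by (field; lra).
      lra.
    + intros x Hx Hcross. replace (mu x) with (- (M * tau x)) by lra.
      rewrite Rmult_1_l. apply field_enters_cone; [exact h_pos | apply Hpos; lra | exact HM].
  - enough (0 < - mu s) by lra.
    apply (is_derive_barrier (fun s => - mu s) (fun x => - mu_field h (tau x) (mu x)) s2 s);
      [exact Hs | intros x _; apply (is_derive_opp mu), mu_derive | lra |].
    intros x Hx Hcross. replace (mu x) with 0 by lra.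
    enough (mu_field h (tau x) 0 < 0) by lra.
    apply mu_field_neg_axis; [exact h_pos | apply Hpos; lra].
Qed.

(* In the cone, [r2 <= (1 + M^2) tau^2], so [tau] is bounded below by some
   [d > 0]; then [r2' = 2 tau >= 2 d] makes [r2], hence [tau], unbounded. *)
Lemma tau_to_p_infty : is_lim tau p_infty p_infty.
Proof.
  destruct eventually_in_cone as [s0 [M Hcone]].
  set (C := 1 + M ^ 2). assert (HC : 0 < C) by (unfold C; nra).
  assert (Hr2tau : forall s, s0 <= s -> r2 s <= C * tau s ^ 2).
  { intros s Hs. specialize (Hcone s Hs). unfold r2, C. nra. }
  assert (HR0 : 0 < r2 s0) by (specialize (Hcone s0 (Rle_refl _)); unfold r2; nra).
  assert (Hr2mono : forall s, s0 <= s -> r2 s0 <= r2 s).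
  { intros s Hs.
    assert (r2 s0 + 2 * 0 * (s - s0) <= r2 s)
      by (apply r2_ge_slope; [exact Hs | intros x Hx; specialize (Hcone x ltac:(lra)); lra]).
    lra. }
  set (d := Rmin 1 (r2 s0 / C)).
  assert (Hd : 0 < d) by (apply Rmin_pos; [lra | apply Rdiv_lt_0_compat; lra]).
  assert (Htau_d : forall s, s0 <= s -> d <= tau s).
  { intros s Hs. unfold d.
    destruct (Rle_or_lt 1 (tau s)) as [Hge|Hlt]; [pose proof (Rmin_l 1 (r2 s0 / C)); lra|].
    apply Rle_trans with (r2 s0 / C); [apply Rmin_r|].
    specialize (Hr2mono s Hs). specialize (Hr2tau s Hs). specialize (Hcone s Hs).
    apply Rle_div_l; [exact HC|]. nra. }
  apply is_lim_spec. intros T. set (T' := Rmax T 1).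
  assert (HT' : T <= T' /\ 1 <= T') by (split; [apply Rmax_l | apply Rmax_r]).
  exists (s0 + C * T' ^ 2 / (2 * d)). intros s Hs.
  assert (0 <= C * T' ^ 2 / (2 * d)) by (apply Rdiv_le_0_compat; nra).
  assert (r2 s0 + 2 * d * (s - s0) <= r2 s)
    by (apply r2_ge_slope; [lra | intros x Hx; apply Htau_d; lra]).
  assert (2 * d * (s - s0) > C * T' ^ 2)
    by (apply (Rmult_lt_compat_l (2 * d)) in Hs; [|lra];
        replace (2 * d * (s0 + C * T' ^ 2 / (2 * d))) with (2 * d * s0 + C * T' ^ 2) in Hs
          by (field; lra); lra).
  specialize (Hr2tau s ltac:(lra)). specialize (Hcone s ltac:(lra)).
  assert (T' ^ 2 < tau s ^ 2) by nra.
  nra.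
Qed.

(* Once [tau >= 2], [tau + mu] decreases at rate [1/5] while [mu >= - tau]. *)
Lemma mu_to_m_infty : is_lim mu p_infty m_infty.
Proof.
  destruct eventually_in_cone as [s0 [M Hcone]].
  pose proof tau_to_p_infty as Htau. apply is_lim_spec in Htau.
  destruct (Htau 2) as [S2 HS2].
  set (s3 := Rmax (S2 + 1) s0).
  assert (Hs3 : S2 + 1 <= s3 /\ s0 <= s3) by (split; [apply Rmax_l | apply Rmax_r]).
  assert (Hdiag : forall x, s3 <= x -> - tau x <= mu x ->
    tau_field h (tau x) (mu x) + mu_field h (tau x) (mu x) <= - 1 / 5).
  { intros x Hx Hmu. specialize (Hcone x ltac:(lra)).
    apply diag_field_le; [exact h_pos | apply Rlt_le, HS2 | split]; lra. }
  set (sum := fun s => 1 * tau s + 1 * mu s).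
  assert (Hsum : forall x, is_derive sum x
      (1 * tau_field h (tau x) (mu x) + 1 * mu_field h (tau x) (mu x)))
    by (intro x; apply is_derive_lin_comb; auto).
  assert (Hcross : exists s4, s3 <= s4 /\ sum s4 < 0).
  { apply NNPP; intro Hn.
    assert (Hge : forall s, s3 <= s -> 0 <= sum s)
      by (intros s Hs; apply Rnot_lt_le; intro; apply Hn; eauto).
    set (s := s3 + 5 * sum s3 + 1).
    assert (Hs : s3 <= s) by (unfold s; specialize (Hge s3 (Rle_refl _)); lra).
    assert (sum s <= sum s3 + - 1 / 5 * (s - s3)).
    { apply (is_derive_le_slope sum (fun x =>
        1 * tau_field h (tau x) (mu x) + 1 * mu_field h (tau x) (mu x)));
        [exact Hs | intros x _; apply Hsum |].
      intros x Hx. rewrite !Rmult_1_l. apply Hdiag; [lra|].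
      specialize (Hge x ltac:(lra)). unfold sum in Hge. lra. }
    specialize (Hge s Hs). unfold s in *. lra. }
  destruct Hcross as [s4 [Hs4 Hneg]].
  assert (Hbelow : forall s, s4 <= s -> mu s < - tau s).
  { intros s Hs. enough (0 < - sum s) by (unfold sum in *; lra).
    apply (is_derive_barrier (fun s => - sum s)
      (fun x => - (1 * tau_field h (tau x) (mu x) + 1 * mu_field h (tau x) (mu x))) s4 s);
      [exact Hs | intros x _; apply (is_derive_opp sum), Hsum | lra |].
    intros x Hx Hx0. unfold sum in Hx0. rewrite !Rmult_1_l.
    assert (tau_field h (tau x) (mu x) + mu_field h (tau x) (mu x) <= - 1 / 5)
      by (apply Hdiag; lra).
    lra. }
  apply is_lim_spec. intros T. destruct (Htau (- T)) as [S HS].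
  exists (Rmax S s4). intros s Hs.
  pose proof (Rmax_l S s4). pose proof (Rmax_r S s4).
  specialize (HS s ltac:(lra)). specialize (Hbelow s ltac:(lra)). lra.
Qed.

End Forward.

Theorem claim6 (h : R) (tau mu : R -> R) :
  0 < h ->
  (forall s, is_derive tau s (1 + K h (tau s) (mu s) * mu s)) ->
  (forall s, is_derive mu s (- (K h (tau s) (mu s) * tau s))) ->
  is_lim tau p_infty p_infty /\ is_lim tau m_infty m_infty /\
  is_lim mu p_infty m_infty /\ is_lim mu m_infty p_infty.
Proof.
  intros Hh Htau Hmu.
  set (tau' := fun s => - tau (- s)). set (mu' := fun s => - mu (- s)).
  assert (Htau' : forall s, is_derive tau' s (tau_field h (tau' s) (mu' s))).
  { intro s. unfold tau', mu'. rewrite tau_field_opp by exact Hh.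
    apply is_derive_reflect, Htau. }
  assert (Hmu' : forall s, is_derive mu' s (mu_field h (tau' s) (mu' s))).
  { intro s. unfold tau', mu'. rewrite mu_field_opp by exact Hh.
    apply is_derive_reflect, Hmu. }
  split; [|split; [|split]].
  - exact (tau_to_p_infty h tau mu Hh Htau Hmu).
  - apply (is_lim_ext (fun s => - tau' (- s)));
      [intro s; unfold tau'; rewrite !Ropp_involutive; reflexivity|].
    exact (is_lim_reflect tau' p_infty (tau_to_p_infty h tau' mu' Hh Htau' Hmu')).
  - exact (mu_to_m_infty h tau mu Hh Htau Hmu).
  - apply (is_lim_ext (fun s => - mu' (- s)));
      [intro s; unfold mu'; rewrite !Ropp_involutive; reflexivity|].
    exact (is_lim_reflect mu' m_infty (mu_to_m_infty h tau' mu' Hh Htau' Hmu')).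
Qed.
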